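(* Let $d\ge 7$, let $G$ be a $d$-regular graph with girth $5$, let $x\in V(G)$ with neighbors $x_1,\dots,x_d$ (in this fixed order) and bunches $X_t=N(x_t)\setminus\{x\}$, $t\in[d]$. Fix $i$ with $2\le i\le d$ and suppose every vertex of $X_i$ has backward degree at most $1$. Suppose $c$ is a proper partial coloring of $G$ defined on $N[x]\cup\bigcup_{t\in[i-1]}X_t$ with $c(x)=d+1$, $c(x_t)=t$ for all $t\in[d]$, and such that for each $t\in[i-1]$ the vertices of $X_t$ receive pairwise distinct colors from $[d]\setminus\{t\}$ (so that $x,x_1,\dots,x_{i-1}$ are b-vertices of colors $d+1,1,\dots,i-1$). Then $c$ can be extended to a proper partial coloring on $N[x]\cup\bigcup_{t\in[i]}X_t$ in which the vertices of $X_i$ receive pairwise distinct colors from $[d]\setminus\{i\}$, so that $x_i$ is also a b-vertex (of color $i$).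
   Context: $[k]=\{1,\dots,k\}$. The $i$-th bunch of $x$ is $X_i=N(x_i)\setminus\{x\}$, which has $d-1$ vertices. With respect to the ordering $x_1,\dots,x_d$, the backward degree of a vertex $v\in X_i$ is the number of neighbors of $v$ in $X_1\cup\dots\cup X_{i-1}$. A vertex $v$ is a b-vertex of a (partial) coloring with colors $[d+1]$ if all $d+1$ colors appear on its closed neighborhood $N[v]$. *)

From mathcomp Require Import all_boot.
Set Implicit Arguments. Unset Strict Implicit. Unset Printing Implicit Defensive.

Definition simple_graph (T : finType) (e : rel T) : Prop :=
  symmetric e /\ irreflexive e.

Definition nbhd (T : finType) (e : rel T) (v : T) : {set T} := [set w | e v w].

Definition regular (T : finType) (e : rel T) (d : nat) : Prop :=
  forall v : T, #|nbhd e v| = d.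

Definition has_cycle_of_length (T : finType) (e : rel T) (k : nat) : Prop :=
  3 <= k /\ exists f : nat -> T,
    {in [pred j | j < k] &, injective f} /\
    forall j, j < k -> e (f j) (f (j.+1 %% k)).

Definition girth_eq (T : finType) (e : rel T) (g : nat) : Prop :=
  (forall k, k < g -> ~ has_cycle_of_length e k) /\ has_cycle_of_length e g.

(* the t-th bunch of x, with neighbours listed by xn : nat -> T (1-indexed) *)
Definition bunch (T : finType) (e : rel T) (x : T) (xn : nat -> T) (t : nat)
  : {set T} := nbhd e (xn t) :\ x.

Definition bunches_upto (T : finType) (e : rel T) (x : T) (xn : nat -> T)
  (k : nat) : {set T} := \bigcup_(1 <= t < k.+1) bunch e x xn t.

Definition backward_degree (T : finType) (e : rel T) (x : T) (xn : nat -> T)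
  (i : nat) (v : T) : nat :=
  #|nbhd e v :&: bunches_upto e x xn i.-1|.

(* partial colorings: c v = None means v is uncolored *)
Definition proper_partial (T : finType) (e : rel T) (c : T -> option nat) : Prop :=
  forall u v a b, e u v -> c u = Some a -> c v = Some b -> a <> b.

Definition partial_coloring_on (T : finType) (e : rel T) (k : nat)
  (c : T -> option nat) (D : {set T}) : Prop :=
  proper_partial e c /\
  (forall v, (v \in D) <-> c v <> None) /\
  (forall v a, c v = Some a -> 1 <= a <= k).

Definition rainbow_avoiding (T : finType) (c : T -> option nat) (X : {set T})
  (d t : nat) : Prop :=
  (forall v, v \in X -> exists a, c v = Some a /\ 1 <= a <= d /\ a <> t) /\
  (forall u v, u \in X -> v \in X -> c u = c v -> u = v).

From mathcomp Require Import all_boot zify.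
Set Implicit Arguments. Unset Strict Implicit. Unset Printing Implicit Defensive.

(* A vertex v of X_i is adjacent neither to x nor to any x_t with t <> i (girth 5), and
   by the backward-degree hypothesis it has at most one neighbour in X_1, ..., X_{i-1}.
   So its coloured neighbours forbid only the colour i and at most one more colour, its
   "back colour". Colouring X_i rainbow from [d] \ {i} is then a bijection between d-1
   vertices and d-1 colours in which each vertex misses at most one colour; it exists
   unless some colour a is the back colour of every vertex of X_i. But then the earlier
   neighbours of colour a are pairwise distinct (two equal ones would close a 4-cycle
   through x_i) and lie in distinct bunches X_t with t <> a, since those bunches are
   rainbow and avoid colour t: d-1 vertices for only d-2 admissible bunches. *)

Lemma bigcup_natP (T : finType) (m n : nat) (F : nat -> {set T}) w :
  reflect (exists2 t, m <= t < n & w \in F t) (w \in \bigcup_(m <= t < n) F t).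
Proof.
apply: (iffP idP) => [|[t tmn wF]].
  rewrite big_seq_cond; elim/big_rec: _ => [|t A /andP[tmn _] IH]; first by rewrite inE.
  by case/setUP => [wF|/IH//]; exists t; rewrite // -mem_index_iota.
by rewrite (big_rem t) ?mem_index_iota //= inE wF.
Qed.

Lemma cycle_has_cycle_of_length (T : finType) (e : rel T) (s : seq T) :
  3 <= size s -> uniq s -> cycle e s -> has_cycle_of_length e (size s).
Proof.
case: s => [//|y p] size_s uniq_s /(pathP y) cyc; split => //.
exists (nth y (y :: p)); split.
  by move=> j k; rewrite !inE => js ks /eqP; rewrite nth_uniq // => /eqP.
move=> j js; have := cyc j; rewrite size_rcons -rcons_cons => /(_ js).
rewrite !nth_rcons js /=.
case: ltnP => [jp | pj]; first by rewrite modn_small ?ltnS.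
have -> : j = size p by move: js => /= js; lia.
by rewrite eqxx modnn.
Qed.

Section GirthAtLeastFive.

Variables (T : finType) (e : rel T).
Hypotheses (e_simple : simple_graph e)
  (e_girth : forall k, k < 5 -> ~ has_cycle_of_length e k).

Lemma edge_neq u v : e u v -> u != v.
Proof. by case: e_simple => _ e_irr euv; apply: contraTneq euv => ->; rewrite e_irr. Qed.

Lemma triangle_free a b c : e a b -> e b c -> ~~ e c a.
Proof.
move=> eab ebc; apply/negP => eca; apply: (e_girth (isT : 3 < 5)).
apply: (@cycle_has_cycle_of_length _ e [:: a; b; c]) => //=; last by rewrite eab ebc eca.
by rewrite !inE negb_or (edge_neq eab) (edge_neq ebc) eq_sym (edge_neq eca).
Qed.

Lemma common_nbr_unique a c b b' : a != c ->
  e a b -> e b c -> e a b' -> e b' c -> b = b'.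
Proof.
have [e_sym _] := e_simple.
move=> ac eab ebc eab' eb'c; case: (eqVneq b b') => // bb'.
case: (e_girth (isT : 4 < 5)).
apply: (@cycle_has_cycle_of_length _ e [:: a; b; c; b']) => //=.
  rewrite !inE !negb_or ac bb' (edge_neq eab) (edge_neq ebc) (edge_neq eab') /=.
  by rewrite eq_sym (edge_neq eb'c).
by rewrite eab ebc e_sym eb'c e_sym eab'.
Qed.

End GirthAtLeastFive.

Section AvoidingAssignment.

Variables (T C : eqType) (f : T -> option C).

(* [f u] is the colour forbidden for [u], if any. *)
Definition colors_allowed (S : seq T) (L : seq C) :=
  {in L, forall a, has (fun u => f u != Some a) S}.

Lemma colors_allowed_rem S L : uniq S -> uniq L -> size S = size L -> 0 < size L ->
  colors_allowed S L ->
  exists a u, [/\ a \in L, u \in S, f u != Some a & colors_allowed (rem u S) (rem a L)].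
Proof.
move=> uniqS uniqL sizeSL L_gt0 allowed.
have [a aL] : exists a, a \in L.
  by case: L L_gt0 {uniqL sizeSL allowed} => // a L; exists a; rewrite mem_head.
have /hasP[u uS fu] := allowed a aL.
(* If removing [u] leaves a colour [b] forbidden for every remaining vertex, then [u] is
   the only vertex allowed [b], and [u] takes [b] instead of [a]. *)
case: (boolP (has (fun b => all (fun w => f w == Some b) (rem u S)) (rem a L)))
  => [|/hasPn free].
  case/hasP=> b baL /allP forbid_b; have bL := mem_rem baL.
  exists b, u; split => //.
    have /hasP[w wS fw] := allowed b bL; case: (eqVneq w u) fw => [-> //| wu].
    by rewrite (eqP (forbid_b w _)) ?eqxx // (mem_rem_uniq _ uniqS) inE wu.
  move=> b' b'bL; case Su: (rem u S) forbid_b => [|w S'] forbid_b.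
    by move: baL; have := size_rem uS; rewrite Su sizeSL -(size_rem aL) => /esym/size0nil ->.
  apply/hasP; exists w; rewrite ?mem_head // (eqP (forbid_b w _)) ?mem_head //.
  by move: b'bL; rewrite (mem_rem_uniq _ uniqL) inE eq_sym => /andP[].
by exists a, u; split => // b /free; rewrite -has_predC.
Qed.

Lemma avoiding_injection (c0 : C) S L : uniq S -> uniq L -> size S = size L ->
  colors_allowed S L ->
  exists s : T -> C, {in S, forall u, s u \in L /\ f u != Some (s u)} /\ {in S &, injective s}.
Proof.
move sizeS: (size S) => n; elim: n S L sizeS => [|n IH] S L sizeS uniqS uniqL sizeSL allowed.
  by exists (fun=> c0); rewrite (size0nil sizeS).
have [|a [u [aL uS fu allowed']]] :=
  colors_allowed_rem uniqS uniqL (etrans sizeS sizeSL) _ allowed; first by rewrite -sizeSL.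
have [||s [s_ok s_inj]] :=
  IH (rem u S) (rem a L) _ (rem_uniq u uniqS) (rem_uniq a uniqL) _ allowed'.
- by rewrite size_rem // sizeS.
- by rewrite size_rem // -sizeSL.
have memS v : v \in S -> v != u -> v \in rem u S by rewrite (mem_rem_uniq _ uniqS) inE => vS ->.
have s_neq_a v : v \in S -> v != u -> s v != a.
  move=> vS vu; have [+ _] := s_ok v (memS v vS vu).
  by rewrite (mem_rem_uniq _ uniqL) inE => /andP[].
exists (fun v => if v == u then a else s v); split.
  move=> v vS; case: eqP => [-> //| /eqP vu].
  by have [/mem_rem + ->] := s_ok v (memS v vS vu).
move=> v w vS wS /=; case: (eqVneq v u) => [->|vu]; case: (eqVneq w u) => [->|wu] //.
- by move=> au; move: (s_neq_a w wS wu); rewrite au eqxx.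
- by move=> su; move: (s_neq_a v vS vu); rewrite su eqxx.
- by apply: s_inj; apply: memS.
Qed.

End AvoidingAssignment.

Lemma bunches_upto_pred (T : finType) (e : rel T) x xn k : 0 < k ->
  bunches_upto e x xn k = bunches_upto e x xn k.-1 :|: bunch e x xn k.
Proof. by case: k => // k _; rewrite /bunches_upto big_nat_recr. Qed.

Section ExtendColoring.

Variables (T : finType) (e : rel T) (X : {set T}) (s : T -> nat) (c : T -> option nat).

Definition extend_on v := if v \in X then Some (s v) else c v.

Lemma extend_on_coloring k D : simple_graph e -> partial_coloring_on e k c D ->
  {in X, forall v, 1 <= s v <= k} -> {in X &, injective s} ->
  (forall u v b, u \in X -> e u v -> c v = Some b -> s u != b) ->
  partial_coloring_on e k extend_on (D :|: X).
Proof.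
move=> [e_sym e_irr] [c_proper [c_dom c_range]] s_range s_inj s_compat; rewrite /extend_on.
split; [|split].
- move=> u v a b euv; case: ifP => uX; case: ifP => vX.
  + by move=> [<-] [<-] /(s_inj _ _ uX vX) uv; rewrite uv e_irr in euv.
  + by move=> [<-] cv; apply/eqP; apply: s_compat cv.
  + by move=> cu [<-]; apply/nesym/eqP; apply: s_compat cu; rewrite // e_sym.
  + exact: c_proper.
- by move=> v; rewrite in_setU; case: ifP => vX; rewrite ?orbT ?orbF.
- by move=> v a; case: ifP => [vX [<-]|_ /c_range]; first exact: s_range.
Qed.

Lemma extend_on_rainbow d t : {in X, forall v, 1 <= s v <= d /\ s v != t} ->
  {in X &, injective s} -> rainbow_avoiding extend_on X d t.
Proof.
move=> s_ok s_inj; rewrite /extend_on; split=> [v vX | u v uX vX].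
  have [v_range vt] := s_ok v vX; rewrite vX; exists (s v); do !split => //; exact/eqP.
by rewrite uX vX => -[/s_inj]; apply.
Qed.

Lemma extend_on_agrees : {in X, forall v, c v = None} ->
  forall v a, c v = Some a -> extend_on v = Some a.
Proof. by move=> X_fresh v a cv; rewrite /extend_on; case: ifP => // /X_fresh; rewrite cv. Qed.

End ExtendColoring.

Section NextBunch.

Variables (T : finType) (e : rel T) (d : nat) (x : T) (xn : nat -> T) (i : nat)
  (c : T -> option nat).
Hypotheses (e_simple : simple_graph e) (e_regular : regular e d)
  (e_girth : forall k, k < 5 -> ~ has_cycle_of_length e k)
  (xn_inj : {in [pred t | 1 <= t <= d] &, injective xn})
  (nbhd_x : forall v, e x v <-> exists2 t, 1 <= t <= d & v = xn t)
  (i_range : 1 <= i <= d)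
  (back_deg : forall v, v \in bunch e x xn i -> backward_degree e x xn i v <= 1)
  (c_coloring : partial_coloring_on e d.+1 c (x |: nbhd e x :|: bunches_upto e x xn i.-1))
  (c_xn : forall t, 1 <= t <= d -> c (xn t) = Some t)
  (c_rainbow : forall t, 1 <= t <= i.-1 -> rainbow_avoiding c (bunch e x xn t) d t).

Local Notation X := (bunch e x xn).
Local Notation B := (bunches_upto e x xn i.-1).

Let e_sym : symmetric e := e_simple.1.

Lemma adj_x_xn t : 1 <= t <= d -> e x (xn t).
Proof. by move=> t_range; apply/nbhd_x; exists t. Qed.

Lemma xn_neq t r : 1 <= t <= d -> 1 <= r <= d -> t != r -> xn t != xn r.
Proof. by move=> t_d r_d; apply: contra => /eqP/(xn_inj t_d r_d)->. Qed.

Lemma mem_bunch t w : (w \in X t) = (w != x) && e (xn t) w.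
Proof. by rewrite !inE. Qed.

Lemma bunch_adj t w : w \in X t -> e (xn t) w.
Proof. by rewrite mem_bunch => /andP[]. Qed.

Lemma bunch_nadj_x t w : 1 <= t <= d -> w \in X t -> ~~ e x w.
Proof.
move=> t_range; rewrite mem_bunch => /andP[_ etw]; rewrite e_sym.
exact: (triangle_free e_simple e_girth (adj_x_xn t_range) etw).
Qed.

Lemma nbhd_x_adj_bunch t w y : 1 <= t <= d -> w \in X t -> e x y -> e y w -> y = xn t.
Proof.
move=> t_d; rewrite mem_bunch => /andP[wx etw] exy eyw.
by apply: (common_nbr_unique e_simple e_girth _ exy eyw (adj_x_xn t_d) etw); rewrite eq_sym.
Qed.

Lemma bunch_nadj_xn t r w : 1 <= t <= d -> 1 <= r <= d -> t != r ->
  w \in X t -> ~~ e (xn r) w.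
Proof.
move=> t_d r_d tr wXt; apply/negP => erw.
have := nbhd_x_adj_bunch t_d wXt (adj_x_xn r_d) erw.
by move/eqP; rewrite (negbTE (xn_neq r_d t_d _)) // eq_sym.
Qed.

Lemma mem_prev_bunches w : reflect (exists2 t, 1 <= t < i & w \in X t) (w \in B).
Proof. by rewrite /bunches_upto prednK; [exact: bigcup_natP | case/andP: i_range]. Qed.

Lemma bunch_fresh v : v \in X i -> v \notin x |: nbhd e x :|: B.
Proof.
move=> vXi; have [vx eiv] : v != x /\ e (xn i) v by apply/andP; rewrite -mem_bunch.
rewrite !inE !negb_or vx (bunch_nadj_x i_range vXi) /=.
apply/mem_prev_bunches => -[t /andP[t_gt0 t_lt_i] vXt].
have t_d : 1 <= t <= d by lia.
by have := bunch_nadj_xn t_d i_range (negbT (ltn_eqF t_lt_i)) vXt; rewrite eiv.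
Qed.

Lemma bunch_uncolored : {in X i, forall v, c v = None}.
Proof.
case: c_coloring => _ [c_dom _] v /bunch_fresh v_fresh.
by case cv: (c v) => [a|] //; case/negP: v_fresh; apply/c_dom; rewrite cv.
Qed.

Lemma card_bunch t : 1 <= t <= d -> #|X t| = d.-1.
Proof.
move=> t_d; have := cardsD1 x (nbhd e (xn t)).
by rewrite e_regular inE e_sym adj_x_xn // add1n => ->.
Qed.

Definition back_color v := obind c [pick w in nbhd e v :&: B].

Lemma back_colorE v w : v \in X i -> e v w -> w \in B -> back_color v = c w.
Proof.
move=> vXi evw wB; have wN : w \in nbhd e v :&: B by rewrite !inE evw.
rewrite /back_color; case: pickP => [w' w'N | /(_ w)]; last by rewrite wN.
by rewrite /= (card_le1_eqP (back_deg vXi) w' w w'N wN).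
Qed.

Definition x_anchor w := odflt x [pick y in nbhd e x :&: nbhd e w].

Lemma x_anchor_bunch t w : 1 <= t <= d -> w \in X t -> x_anchor w = xn t.
Proof.
move=> t_d wXt; rewrite /x_anchor; case: pickP => [y | /(_ (xn t))].
  by rewrite !inE => /andP[exy ewy]; rewrite /= (nbhd_x_adj_bunch t_d wXt exy) // e_sym.
by rewrite !inE adj_x_xn // e_sym bunch_adj.
Qed.

Lemma card_colored_prev_bunches a : 1 <= a <= d -> a != i ->
  #|[set w in B | c w == Some a]| <= d.-2.
Proof.
move=> a_d ai; set W := [set w in B | c w == Some a].
have colored_index w : w \in W ->
    exists t, [/\ 1 <= t <= i.-1, t != a, w \in X t & x_anchor w = xn t].
  rewrite inE => /andP[wB /eqP cw]; case/mem_prev_bunches: wB => t t_i wXt.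
  have t_i' : 1 <= t <= i.-1 by lia.
  have [/(_ w wXt)[a' [ca' [_ a't]]] _] := c_rainbow t_i'.
  exists t; split => //; last by apply: x_anchor_bunch wXt; lia.
  by apply/eqP => ta; apply: a't; move: ca'; rewrite cw ta => -[->].
have anchor_inj : {in W &, injective x_anchor}.
  move=> w1 w2 w1W w2W; have [t1 [t1_i _ wXt1 ->]] := colored_index w1 w1W.
  have [t2 [t2_i _ wXt2 ->]] := colored_index w2 w2W.
  have [t1_d t2_d] : 1 <= t1 <= d /\ 1 <= t2 <= d by lia.
  move/(xn_inj t1_d t2_d) => t12; rewrite -t12 in wXt2.
  have [_ rainbow_inj] := c_rainbow t1_i; apply: rainbow_inj => //.
  by move: w1W w2W; rewrite !inE => /andP[_ /eqP ->] /andP[_ /eqP ->].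
have card_target : #|nbhd e x :\ xn i :\ xn a| = d.-2.
  have := cardsD1 (xn a) (nbhd e x :\ xn i); have := cardsD1 (xn i) (nbhd e x).
  rewrite e_regular !inE xn_neq // !adj_x_xn //; lia.
rewrite -card_target -(card_in_imset anchor_inj); apply: subset_leq_card.
apply/subsetP => _ /imsetP[w /colored_index[t [t_i ta _ ->]] ->].
have t_d : 1 <= t <= d by lia.
by rewrite !inE adj_x_xn // !xn_neq //; lia.
Qed.

Lemma back_color_allowed a : 1 <= a <= d -> a != i ->
  exists2 v, v \in X i & back_color v != Some a.
Proof.
move=> a_d ai; apply/exists_inP; apply: contraT; rewrite negb_exists_in => /forall_inP all_a.
pose w_of v := odflt x [pick w in B | e v w && (c w == Some a)].
have w_ofP v : v \in X i -> [/\ w_of v \in B, e v (w_of v) & c (w_of v) = Some a].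
  move=> vXi; have := all_a v vXi; rewrite negbK /back_color.
  case: pickP => // w; rewrite !inE => /andP[evw wB] /= /eqP cw.
  rewrite /w_of; case: pickP => [w' /and3P[w'B evw' /eqP cw'] // | /(_ w)].
  by rewrite wB evw cw eqxx.
have w_of_inj : {in X i &, injective w_of}.
  move=> v1 v2 v1X v2X eq_w; case: (eqVneq v1 v2) => // v12; exfalso.
  have [wB ev1w _] := w_ofP v1 v1X; have [_ ev2w _] := w_ofP v2 v2X.
  have w_xi : w_of v1 = xn i.
    apply: (common_nbr_unique e_simple e_girth v12 ev1w); first by rewrite e_sym eq_w.
      by rewrite e_sym bunch_adj.
    exact: bunch_adj.
  case/mem_prev_bunches: wB => t t_i wXt.
  have t_d : 1 <= t <= d by lia.
  by have := bunch_nadj_x t_d wXt; rewrite w_xi adj_x_xn.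
have := card_colored_prev_bunches a_d ai.
have : #|X i| <= #|[set w in B | c w == Some a]|.
  rewrite -(card_in_imset w_of_inj); apply: subset_leq_card.
  by apply/subsetP => _ /imsetP[v vXi ->]; have [wB _ cw] := w_ofP v vXi; rewrite inE wB cw eqxx.
rewrite card_bunch //; lia.
Qed.

Lemma bunch_colored_nbr u v b : u \in X i -> e u v -> c v = Some b ->
  b = i \/ back_color u = Some b.
Proof.
move=> uXi euv cv; have [_ [c_dom _]] := c_coloring.
have : v \in x |: nbhd e x :|: B by apply/c_dom; rewrite cv.
rewrite !inE => /orP[/orP[/eqP vx | /nbhd_x[t t_d vt]] | vB].
- by move: (bunch_nadj_x i_range uXi); rewrite e_sym -vx euv.
- case: (eqVneq i t) => [it | it]; first by left; move: cv; rewrite vt -it c_xn // => -[].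
  by move: (bunch_nadj_xn i_range t_d it uXi); rewrite -vt e_sym euv.
- by right; rewrite (back_colorE uXi euv vB).
Qed.

Lemma bunch_recoloring : exists s : T -> nat,
  [/\ {in X i, forall v, 1 <= s v <= d /\ s v != i}, {in X i &, injective s} &
      forall u v b, u \in X i -> e u v -> c v = Some b -> s u != b].
Proof.
have mem_colors a : (a \in rem i (iota 1 d)) = (a != i) && (1 <= a <= d).
  by rewrite (mem_rem_uniq _ (iota_uniq 1 d)) inE mem_iota; congr (_ && _); lia.
have [||s [s_ok s_inj]] := avoiding_injection (f := back_color) 0 (enum_uniq (mem (X i)))
  (rem_uniq i (iota_uniq 1 d)).
- by rewrite -cardE card_bunch // size_rem ?size_iota // mem_iota; lia.
- move=> a; rewrite mem_colors => /andP[ai a_d].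
  by have [v vXi va] := back_color_allowed a_d ai; apply/hasP; exists v; rewrite ?mem_enum.
have s_okXi v : v \in X i -> [/\ s v != i, 1 <= s v <= d & back_color v != Some (s v)].
  by move=> vXi; have [] := s_ok v; rewrite ?mem_enum // mem_colors => /andP[].
exists s; split.
- by move=> v /s_okXi[].
- by move=> u v uXi vXi; apply: s_inj; rewrite mem_enum.
- move=> u v b uXi euv cv; have [sui _ su_back] := s_okXi u uXi.
  case: (bunch_colored_nbr uXi euv cv) => [-> // | bu].
  by apply: contraNneq su_back => ->; rewrite bu.
Qed.

End NextBunch.

Theorem mainTheorem6 (T : finType) (e : rel T) (d : nat)
  (x : T) (xn : nat -> T) (i : nat) (c : T -> option nat) :
  7 <= d ->
  simple_graph e ->
  regular e d ->
  girth_eq e 5 ->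
  {in [pred t | 1 <= t <= d] &, injective xn} ->
  (forall v, e x v <-> exists2 t, 1 <= t <= d & v = xn t) ->
  2 <= i <= d ->
  (forall v, v \in bunch e x xn i -> backward_degree e x xn i v <= 1) ->
  partial_coloring_on e d.+1 c
    (x |: nbhd e x :|: bunches_upto e x xn i.-1) ->
  c x = Some d.+1 ->
  (forall t, 1 <= t <= d -> c (xn t) = Some t) ->
  (forall t, 1 <= t <= i.-1 -> rainbow_avoiding c (bunch e x xn t) d t) ->
  exists c' : T -> option nat,
    partial_coloring_on e d.+1 c'
      (x |: nbhd e x :|: bunches_upto e x xn i) /\
    (forall v a, c v = Some a -> c' v = Some a) /\
    rainbow_avoiding c' (bunch e x xn i) d i.
Proof.
move=> _ e_simple e_regular [e_girth _] xn_inj nbhd_x /andP[i_gt1 i_le_d] back_deg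
  c_coloring _ c_xn c_rainbow.
have i_range : 1 <= i <= d by rewrite (ltnW i_gt1) i_le_d.
have [s [s_range s_inj s_compat]] := bunch_recoloring e_simple e_regular e_girth xn_inj
  nbhd_x i_range back_deg c_coloring c_xn c_rainbow.
exists (extend_on (bunch e x xn i) s c); split; [|split].
- rewrite bunches_upto_pred ?(ltnW i_gt1) // setUA.
  apply: (extend_on_coloring e_simple c_coloring) => // v /s_range[/andP[-> /leqW //]].
- apply: extend_on_agrees.
  exact: bunch_uncolored e_simple e_girth xn_inj nbhd_x i_range c_coloring.
- exact: extend_on_rainbow.
Qed.
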